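(* Let $N\ge1$, $f:\mathbb{N}^N\to\mathbb{N}$, $p$ a prime and $\boldsymbol{\ell}\in\mathbb{N}^N$. Then $\binom{p}{\boldsymbol{\ell}}_f\equiv f(\mathbf{m})\pmod p$ if $\boldsymbol{\ell}=p\mathbf{m}$ for some $\mathbf{m}\in\mathbb{N}^N$, and $\binom{p}{\boldsymbol{\ell}}_f\equiv0\pmod p$ otherwise.
   Context: $\mathbb{N}=\{0,1,2,\dots\}$. For $k\ge0$ and $\mathbf{x}\in\mathbb{N}^N$, $\binom{k}{\mathbf{x}}_f=\sum_{\mathbf{m}_1+\cdots+\mathbf{m}_k=\mathbf{x}} f(\mathbf{m}_1)\cdots f(\mathbf{m}_k)$ over tuples of vectors in $\mathbb{N}^N$. *)

From mathcomp Require Import all_boot.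
Set Implicit Arguments. Unset Strict Implicit. Unset Printing Implicit Defensive.

Definition vecN (N : nat) := {ffun 'I_N -> nat}.

(* Componentwise bound: every summand m_i of a decomposition x = m_1+...+m_k
   satisfies m_i j <= x j <= vbound x, so summing over tuples of vectors with
   entries in 'I_(vbound x).+1 enumerates exactly all k-tuples of vectors in
   N^N summing to x. *)
Definition vbound N (x : vecN N) : nat := \max_(j < N) x j.

Definition to_vec N B (v : {ffun 'I_N -> 'I_B}) : vecN N := [ffun j => val (v j)].

Definition binom_f N (f : vecN N -> nat) (k : nat) (x : vecN N) : nat :=
  \sum_(t : {ffun 'I_k -> {ffun 'I_N -> 'I_(vbound x).+1}}
          | [forall j : 'I_N, \sum_(i < k) val (t i j) == x j])
     \prod_(i < k) f (to_vec (t i)).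

Definition scalev N (p : nat) (m : vecN N) : vecN N := [ffun j => p * m j].

(* Cyclic rotation of the p factors permutes the decompositions
   l = m_1 + ... + m_p and preserves the weight f(m_1) ... f(m_p).  As p is
   prime, every orbit of rotations has size 1 or p, so modulo p only the
   constant tuples (m, ..., m) survive.  Such a tuple is a decomposition exactly
   when l = p m, and its weight f(m)^p is f(m) mod p by Fermat. *)

From mathcomp Require Import all_boot fingroup perm action pgroup cyclic.
Set Implicit Arguments. Unset Strict Implicit. Unset Printing Implicit Defensive.

Section WeightedFixMod.

Variables (aT : finGroupType) (D : {group aT}) (sT : finType).
Variable to : action D sT.
Local Open Scope group_scope.

(* Weighted [pgroup_fix_mod]: an orbit of a non-fixed point has size a positive
   power of p, and F is constant on it. *)
Lemma pgroup_fix_sum_mod (p : nat) (G : {group aT}) (S : {set sT}) (F : sT -> nat) :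
    p.-group G -> [acts G, on S | to] -> {in G, forall a x, F (to x a) = F x} ->
  \sum_(x in S) F x = \sum_(x in 'Fix_(S | to)(G)) F x %[mod p].
Proof.
move=> pG nSG Finv; have sGD := acts_dom nSG.
have nSfG : [acts G, on S :\: 'Fix_to(G) | to].
  rewrite actsD // -(setIidPr sGD); apply: subset_trans (acts_subnorm_fix _ _).
  by rewrite setIS ?normG.
apply/eqP; rewrite (big_setID 'Fix_to(G)) /= eqn_mod_dvd ?leq_addr // addKn.
have /and3P[/eqP coverO tiO _] := orbit_partition nSfG.
rewrite -coverO big_trivIset //; apply: dvdn_sum => _ /imsetP[x /setDP[_ nfx] ->].
have -> : \sum_(y in orbit to G x) F y = (#|orbit to G x| * F x)%N.
  by rewrite -sum_nat_const; apply: eq_bigr => _ /orbitP[a Ga <-]; apply: Finv.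
apply: dvdn_mulr.
have [k oGx]: {k | #|orbit to G x| = (p ^ k)%N}.
  by apply: p_natP; apply: pnat_dvd pG; rewrite card_orbit_in ?dvdn_indexg.
case: k oGx => [/card_orbit1 fix_x | k ->]; last by rewrite expnS dvdn_mulr.
by case/afixP: nfx => a Ga; apply/set1P; rewrite -fix_x mem_orbit.
Qed.

End WeightedFixMod.

Lemma perm_fix_sum_mod (T : finType) (p : nat) (s : {perm T}) (S : {set T})
    (F : T -> nat) :
    (p.-elt s)%g -> (forall x, (s x \in S) = (x \in S)) ->
    (forall x, F (s x) = F x) ->
  \sum_(x in S) F x = \sum_(x in S | s x == x) F x %[mod p].
Proof.
move=> ps sS sF.
have nSs : [acts <[s]>%g, on S | 'P].
  by rewrite cycle_subG; apply/astabsP => x; rewrite /= apermE.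
have Finv : {in <[s]>%g, forall a x, F ('P%act x a) = F x}.
  move=> _ /cycleP[k ->] y; rewrite /= apermE permX.
  by elim: k => //= k <-; rewrite sF.
rewrite (pgroup_fix_sum_mod ps nSs Finv) afix_cycle.
congr (_ %% _); apply: eq_bigl => x.
by rewrite inE; congr (_ && _); apply/afix1P/eqP.
Qed.

Lemma iter_ordS n (i : 'I_n) k : val (iter k (@ordS n) i) = (i + k) %% n.
Proof.
elim: k => [|k IHk] /=; first by rewrite addn0 modn_small.
by rewrite IHk -addn1 modnDml addn1 addnS.
Qed.

Section FfunRotation.

Variables (n : nat) (X : finType).
Implicit Type t : {ffun 'I_n -> X}.

Let rot t : {ffun 'I_n -> X} := [ffun i => t (ordS i)].

Let rot_inj : injective rot.
Proof.
move=> t1 t2 /ffunP eq_rot; apply/ffunP => i.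
by have := eq_rot (ord_pred i); rewrite !ffunE ord_predK.
Qed.

Definition ffun_rot : {perm {ffun 'I_n -> X}} := perm rot_inj.

Lemma ffun_rotE t i : ffun_rot t i = t (ordS i).
Proof. by rewrite permE ffunE. Qed.

Lemma ffun_rotX k t i : (ffun_rot ^+ k)%g t i = t (iter k (@ordS n) i).
Proof.
elim: k i => [|k IHk] i; first by rewrite expg0 perm1.
by rewrite expgSr permM ffun_rotE IHk iterSr.
Qed.

Lemma order_ffun_rot_dvdn : (#[ffun_rot] %| n)%g.
Proof.
rewrite order_dvdn; apply/eqP/permP => t; apply/ffunP => i.
rewrite ffun_rotX perm1; congr (t _); apply: val_inj.
by rewrite iter_ordS modnDr modn_small.
Qed.

Lemma ffun_rot_fixE (i0 : 'I_n) t : (ffun_rot t == t) = (t == [ffun=> t i0]).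
Proof.
apply/eqP/eqP => [fix_t | ->]; last by apply/ffunP => i; rewrite ffun_rotE !ffunE.
have t_iter k i : t (iter k (@ordS n) i) = t i.
  rewrite -ffun_rotX; elim: k => [|k IHk]; first by rewrite expg0 perm1.
  by rewrite expgS permM fix_t.
apply/ffunP => i; rewrite ffunE -(t_iter (i + n - i0) i0); congr (t _).
apply: val_inj.
by rewrite iter_ordS subnKC ?modnDr ?modn_small // ltnW // ltn_addl.
Qed.

Lemma big_ffun_rot (R : Type) (idx : R) (op : Monoid.com_law idx) (g : X -> R) t :
  \big[op/idx]_i g (ffun_rot t i) = \big[op/idx]_i g (t i).
Proof.
rewrite [RHS](reindex_inj (@ordS_inj n)).
by apply: eq_bigr => i _; rewrite ffun_rotE.
Qed.

End FfunRotation.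

Arguments ffun_rot {n X}.

Lemma scalev_inj N p : 0 < p -> injective (@scalev N p).
Proof.
move=> p_gt0 m1 m2 /ffunP eq_pm; apply/ffunP => j.
by have /eqP := eq_pm j; rewrite !ffunE eqn_pmul2l // => /eqP.
Qed.

Lemma leq_vbound_scalev N p (m : vecN N) j : 0 < p -> m j <= vbound (scalev p m).
Proof.
move=> p_gt0; apply: leq_trans (@leq_bigmax _ (fun j => scalev p m j) j).
by rewrite ffunE leq_pmull.
Qed.

Lemma to_vec_inj N B : injective (@to_vec N B).
Proof.
move=> v1 v2 /ffunP eq_v; apply/ffunP => j; apply: val_inj.
by have := eq_v j; rewrite !ffunE.
Qed.

Lemma to_vec_inord N b (m : vecN N) :
  (forall j, m j <= b) -> to_vec [ffun j => inord (m j) : 'I_b.+1] = m.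
Proof. by move=> le_mb; apply/ffunP => j; rewrite !ffunE /= inordK ?ltnS. Qed.

Section BinomPrime.

Variables (N : nat) (f : vecN N -> nat) (p : nat) (l : vecN N).
Hypothesis p_pr : prime p.

Let B := (vbound l).+1.
Let decomp := [set t : {ffun 'I_p -> {ffun 'I_N -> 'I_B}} |
                [forall j, \sum_(i < p) val (t i j) == l j]].

Let weight (t : {ffun 'I_p -> {ffun 'I_N -> 'I_B}}) :=
  \prod_(i < p) f (to_vec (t i)).

Lemma const_decompE (v : {ffun 'I_N -> 'I_B}) :
  ([ffun=> v] \in decomp) = (l == scalev p (to_vec v)).
Proof.
have sum_const j : \sum_(i < p) val ([ffun=> v] i j) = p * val (v j).
  by under eq_bigr do rewrite ffunE; rewrite sum_nat_const card_ord.
rewrite inE; apply/forallP/eqP => [sum_l | -> j].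
  by apply/ffunP => j; rewrite !ffunE -sum_const; apply/esym/eqP/sum_l.
by rewrite sum_const !ffunE.
Qed.

Lemma binom_f_prime_mod :
  binom_f f p l = \sum_(v : {ffun 'I_N -> 'I_B} | l == scalev p (to_vec v))
                    f (to_vec v) ^ p %[mod p].
Proof.
pose i0 : 'I_p := Ordinal (prime_gt0 p_pr).
have -> : binom_f f p l = \sum_(t in decomp) weight t.
  by apply: eq_bigl => t; rewrite inE.
have rot_elt : (p.-elt (@ffun_rot p {ffun 'I_N -> 'I_B}))%g.
  exact: pnat_dvd (order_ffun_rot_dvdn _ _) (pnat_id p_pr).
have rot_decomp t : (ffun_rot t \in decomp) = (t \in decomp).
  rewrite !inE; apply: eq_forallb => j.
  by rewrite (big_ffun_rot _ (fun v : {ffun 'I_N -> 'I_B} => val (v j))).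
have rot_weight t : weight (ffun_rot t) = weight t.
  exact: (big_ffun_rot _ (fun v => f (to_vec v))).
rewrite (perm_fix_sum_mod rot_elt rot_decomp rot_weight).
congr (_ %% _); rewrite (reindex (fun v => [ffun=> v])) /=; last first.
  exists (fun t => t i0) => [v _ | t /andP[_]]; first by rewrite ffunE.
  by rewrite (ffun_rot_fixE i0) => /eqP.
apply: eq_big => v.
  by rewrite const_decompE (ffun_rot_fixE i0) ffunE eqxx andbT.
by rewrite /weight; under eq_bigr do rewrite ffunE; rewrite prod_nat_const card_ord.
Qed.

End BinomPrime.

Theorem theorem6 (N : nat) (f : vecN N -> nat) (p : nat) (l : vecN N) :
  0 < N -> prime p ->
  (forall m : vecN N, l = scalev p m -> binom_f f p l = f m %[mod p]) /\
  ((~ exists m : vecN N, l = scalev p m) -> binom_f f p l = 0 %[mod p]).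
Proof.
move=> _ p_pr; have p_gt0 := prime_gt0 p_pr.
rewrite !(binom_f_prime_mod f l p_pr); split=> [m l_pm | no_m]; last first.
  by rewrite big_pred0 // => v; apply/eqP => l_pv; apply: no_m; exists (to_vec v).
have le_ml j : m j <= vbound l by rewrite l_pm leq_vbound_scalev.
pose vm := [ffun j => inord (m j) : 'I_(vbound l).+1].
rewrite (big_pred1 vm) => [|v]; first by rewrite to_vec_inord // fermat_little.
rewrite {1}l_pm (inj_eq (scalev_inj p_gt0)) eq_sym -(to_vec_inord le_ml).
by rewrite (inj_eq (@to_vec_inj N _)).
Qed.
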